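(* Let $Q$ be a quasi-ribbon tableau and let $\xi(Q)$ be the array obtained from $Q$ by first sliding every row leftwards so that its leftmost cell lies in column $1$, and then sliding all cells upwards along their columns until each column has its topmost cell in row $1$ and no gaps. Then $\xi(Q)$ is a Young tableau, and for every $i\ge1$ such that $f_i(Q)$ is defined, $\xi(f_i(Q))=\tilde f_i(\xi(Q))$.
   Context: A quasi-ribbon tableau of shape $\sigma=(\sigma_1,\dots,\sigma_r)$ is a filling with positive integers of the diagram having $\sigma_i$ cells in row $i$, the leftmost cell of row $i+1$ directly below the rightmost cell of row $i$, weakly increasing along rows and strictly increasing down columns. A Young tableau is a left-justified array with weakly decreasing row lengths, filled with positive integers weakly increasing along rows and strictly increasing down columns. The column reading of a (quasi-ribbon or Young) tableau reads columns left to right, each bottom to top; operators act on tableaux via their column readings (the result is again the column reading of a tableau of the same shape). Quasi-Kashiwara operator $f_i$ on a word $u$: undefined if $u$ contains a (not necessarily consecutive) subsequence $(i+1)\,i$ or no letter $i$; otherwise replaces the rightmost $i$ by $i+1$. Kashiwara operator $\tilde f_i$: replace each $i$ by $+$, each $i+1$ by $-$, delete other letters, then repeatedly delete factors $-+$ until the word is $+^{a}-^{b}$; if $a=0$ undefined, otherwise change the letter $i$ corresponding to the rightmost remaining $+$ into $i+1$. *)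

From mathcomp Require Import all_boot.
Set Implicit Arguments. Unset Strict Implicit. Unset Printing Implicit Defensive.

(* An array is a list of rows, row i being (offset, entries): it occupies
   columns offset .. offset + size entries - 1 of row i (rows top to bottom). *)
Definition array := seq (nat * seq nat).

Definition cell_at (A : array) (i c : nat) : option nat :=
  let: (o, r) := nth (0, [::]) A i in
  if (o <= c) && (c < o + size r) then Some (nth 0 r (c - o)) else None.

Definition ncols (A : array) : nat := foldr maxn 0 [seq x.1 + size x.2 | x <- A].

Definition col_cells (A : array) (c : nat) : seq (nat * nat) :=
  [seq (i, c) | i <- rev (iota 0 (size A)) & cell_at A i c != None].

Definition reading_cells (A : array) : seq (nat * nat) :=
  flatten [seq col_cells A c | c <- iota 0 (ncols A)].

Definition col_reading (A : array) : seq nat :=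
  flatten [seq pmap (fun i => cell_at A i c) (rev (iota 0 (size A)))
          | c <- iota 0 (ncols A)].

(* the array of the same shape as A whose column reading is w *)
Definition refill (A : array) (w : seq nat) : array :=
  [seq (x.2.1, [seq nth 0 w (index (x.1, c) (reading_cells A))
               | c <- iota x.2.1 (size x.2.2)])
  | x <- zip (iota 0 (size A)) A].

Fixpoint qr_offsets (o : nat) (Q : seq (seq nat)) : seq nat :=
  if Q is r :: Q' then o :: qr_offsets (o + size r - 1) Q' else [::].

Definition qr_array (Q : seq (seq nat)) : array := zip (qr_offsets 0 Q) Q.

Definition is_qrt (Q : seq (seq nat)) : bool :=
  all (fun r => (r != [::]) && sorted leq r && all (fun x => 0 < x) r) Q &&
  (* the only column shared by rows i and i+1 holds last of row i above
     first of row i+1: strict increase down that column *)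
  sorted (fun r s => last 0 r < head 0 s) Q.

Definition young_array (T : seq (seq nat)) : array := [seq (0, r) | r <- T].

Definition is_young (T : seq (seq nat)) : bool :=
  all (fun r => (r != [::]) && sorted leq r && all (fun x => 0 < x) r) T &&
  sorted (fun r s => (size s <= size r) &&
                     all (fun j => nth 0 r j < nth 0 s j) (iota 0 (size s))) T.

Definition xi_cols (Q : seq (seq nat)) : seq (seq nat) :=
  [seq [seq nth 0 r j | r <- Q & j < size r]
  | j <- iota 0 (foldr maxn 0 (map size Q))].

Definition xi (Q : seq (seq nat)) : seq (seq nat) :=
  let C := xi_cols Q in
  [seq [seq nth 0 col k | col <- C & k < size col]
  | k <- iota 0 (foldr maxn 0 (map size C))].

Definition quasi_f_word (i : nat) (u : seq nat) : option (seq nat) :=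
  if subseq [:: i.+1; i] u || (i \notin u) then None
  else Some (rev (set_nth 0 (rev u) (index i (rev u)) i.+1)).

(* signed letters: (position, true = '+' for i, false = '-' for i+1) *)
Definition signs (i : nat) (u : seq nat) : seq (nat * bool) :=
  [seq (k, nth 0 u k == i) | k <- iota 0 (size u)
                           & (nth 0 u k == i) || (nth 0 u k == i.+1)].

(* delete the leftmost factor '-+' (if any) *)
Fixpoint del_mp (s : seq (nat * bool)) : seq (nat * bool) :=
  match s with
  | x :: s' =>
      if (~~ x.2) && (s' != [::]) && (head (0, false) s').2 then behead s'
      else x :: del_mp s'
  | [::] => [::]
  end.

Definition reduce_signs (s : seq (nat * bool)) := iter (size s) del_mp s.

Definition kashiwara_f_word (i : nat) (u : seq nat) : option (seq nat) :=
  let plus := [seq x.1 | x <- reduce_signs (signs i u) & x.2] in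
  if plus is [::] then None else Some (set_nth 0 u (last 0 plus) i.+1).

Definition qr_f (i : nat) (Q : seq (seq nat)) : option (seq (seq nat)) :=
  omap (fun w => map snd (refill (qr_array Q) w))
       (quasi_f_word i (col_reading (qr_array Q))).

Definition young_f (i : nat) (T : seq (seq nat)) : option (seq (seq nat)) :=
  omap (fun w => map snd (refill (young_array T) w))
       (kashiwara_f_word i (col_reading (young_array T))).

From mathcomp Require Import all_boot zify.
Set Implicit Arguments. Unset Strict Implicit. Unset Printing Implicit Defensive.

(* In a quasi-ribbon tableau Q the rows are weakly increasing and each row lies entirely
   below the next one, so the letters i of Q fill a single row a, ending at position p.
   The k-th entry of column j of xi(Q) comes from the k-th row of Q that reaches column j,
   and these rows move weakly down as j grows; this makes xi(Q) a Young tableau.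
   If f_i is defined, no letter i+1 lies below row a: the first cell of row a+1 would hold
   i+1 directly under a last cell i of row a, giving a factor (i+1) i in the column
   reading.  So every i+1 lies in row a to the right of p.  As xi keeps each entry in its
   column, in the readings of both Q and xi(Q) every letter i lies in a column left of
   every letter i+1, the last i being the image of the cell (a, p).  On such words the
   bracketing of the Kashiwara operator cancels nothing, so f~_i changes the same cell as
   f_i, and xi, which only moves cells, commutes with changing one entry. *)

Lemma leq_foldr_maxn s x : x \in s -> x <= foldr maxn 0 s.
Proof.
elim: s => //= y s IH; rewrite in_cons => /orP [/eqP ->|/IH H]; first exact: leq_maxl.
exact: leq_trans H (leq_maxr _ _).
Qed.

Lemma foldr_maxn_gt s k : k < foldr maxn 0 s -> exists2 y, y \in s & k < y.
Proof.
elim: s => //= y s IH; rewrite leq_max => /orP [H|/IH [z Hz Hk]].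
  by exists y; rewrite ?mem_head.
by exists z; rewrite // in_cons Hz orbT.
Qed.

Lemma lt_count_iota (P : pred nat) N j :
  (forall j k, j <= k -> P k -> P j) ->
  (j < count P (iota 0 N)) = P j && (j < N).
Proof.
move=> P_antitone; elim: N => [|N IH]; first by rewrite andbF.
rewrite -[N.+1]addn1 iotaD count_cat /= add0n addn0 addn1 ltnS.
case PN: (P N) => /=.
  have -> : count P (iota 0 N) = N.
    rewrite -[RHS](size_iota 0) -count_predT; apply: eq_in_count => k.
    by rewrite mem_iota => /andP [_ /ltnW Hk]; rewrite (P_antitone _ _ Hk PN).
  rewrite addn1 ltnS; case: leqP => Hj; last by rewrite andbF.
  by rewrite andbT (P_antitone _ _ Hj PN).
by rewrite addn0 IH [j <= N]leq_eqVlt; case: eqP => [->|_] /=; rewrite ?PN.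
Qed.

Lemma nth_filter_ge (P : pred nat) t k : sorted ltn t -> k < size (filter P t) ->
  nth 0 t k <= nth 0 (filter P t) k.
Proof.
elim: t k => //= x t IH k Hs; have Ht := path_sorted Hs.
case: (P x) => /=; first by case: k => [|k] //= Hk; exact: IH.
move=> Hk; apply: leq_trans (IH k Ht Hk).
have Hsz : k < size t by apply: leq_trans Hk _; rewrite size_filter count_size.
case: k Hk Hsz => [|k] Hk Hsz /=.
  by case: t Hs {IH Ht Hk} Hsz => //= y t /andP [Hxy _] _; exact: ltnW.
by apply: ltnW; apply: (sorted_ltn_nth ltn_trans 0 Ht); rewrite ?inE /=; lia.
Qed.

Lemma subseq_nth2 (u : seq nat) m1 m2 : m1 < m2 < size u ->
  subseq [:: nth 0 u m1; nth 0 u m2] u.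
Proof.
move=> /andP [H1 H2]; rewrite -[X in subseq _ X](cat_take_drop m2 u) -cat1s.
apply: cat_subseq; rewrite sub1seq.
  by rewrite -(nth_take 0 H1 u); apply: (mem_nth 0); rewrite size_take H2.
have <- : nth 0 (drop m2 u) 0 = nth 0 u m2 by rewrite nth_drop addn0.
by apply: (mem_nth 0); rewrite size_drop subn_gt0.
Qed.

Lemma subseq2_cat (x y : nat) s t : x \notin s -> y \notin t -> ~~ subseq [:: x; y] (s ++ t).
Proof.
elim: s => [|z s IH] /=.
  by move=> _ Hy; apply: contra Hy => /mem_subseq; apply; rewrite !inE eqxx orbT.
by rewrite in_cons => /norP [/negbTE -> /IH].
Qed.

Lemma rev_set_nth (u : seq nat) j v : j < size u ->
  rev (set_nth 0 (rev u) j v) = set_nth 0 u (size u - j.+1) v.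
Proof.
move=> Hj; apply: (@eq_from_nth _ 0) => [|k].
  by rewrite size_rev !size_set_nth size_rev; lia.
rewrite size_rev size_set_nth size_rev => Hk.
rewrite nth_rev ?size_set_nth ?size_rev; last by lia.
rewrite !nth_set_nth /= nth_rev; last by lia.
have -> : size u - (maxn j.+1 (size u) - k.+1).+1 = k by lia.
by congr (if _ then _ else _); apply/eqP/eqP; lia.
Qed.

Definition last_before_succ (i : nat) (u : seq nat) (n : nat) : Prop :=
  [/\ n < size u, nth 0 u n = i
    & forall m, m < size u -> (nth 0 u m = i -> m <= n) /\ (nth 0 u m = i.+1 -> n < m)].

Lemma last_before_succ_no_descent i u n :
  last_before_succ i u n -> ~~ subseq [:: i.+1; i] u.
Proof.
case=> Hn _ Hm; rewrite -(cat_take_drop n.+1 u); apply: subseq2_cat.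
  apply/(nthP 0) => -[m]; rewrite size_take ltn_min => /andP [Hmn Hmu].
  by rewrite nth_take // => /((Hm m Hmu).2); lia.
apply/(nthP 0) => -[m]; rewrite size_drop nth_drop => Hmu.
have Hk : n.+1 + m < size u by rewrite -ltn_subRL.
by move/((Hm _ Hk).1); lia.
Qed.

Lemma quasi_f_word_last_before_succ i u n : last_before_succ i u n ->
  quasi_f_word i u = Some (set_nth 0 u n i.+1).
Proof.
move=> Hu; rewrite /quasi_f_word (negbTE (last_before_succ_no_descent Hu)).
case: Hu => Hn Hni Hm; rewrite -Hni mem_nth //= Hni.
set j := index i (rev u).
have Hj : j < size u by rewrite -size_rev index_mem mem_rev -Hni mem_nth.
rewrite rev_set_nth //; congr (Some (set_nth _ _ _ _)).
have Hlast : size u - j.+1 <= n.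
  by apply: (Hm _ _).1; [lia | rewrite -nth_rev // nth_index // mem_rev -Hni mem_nth].
have : j <= size u - n.+1.
  have Hrev : nth 0 (rev u) (size u - n.+1) = i.
    by rewrite nth_rev; [rewrite (_ : size u - (size u - n.+1).+1 = n) //|]; lia.
  by rewrite /j -{1}Hrev index_nth // size_rev ltn_subrL (leq_ltn_trans _ Hn).
lia.
Qed.

Lemma del_mp_id (s : seq (nat * bool)) :
  pairwise (fun x y => x.2 || ~~ y.2) s -> del_mp s = s.
Proof.
elim: s => //= x s IH /andP [Hx Hs]; rewrite IH //.
case: s Hx {IH Hs} => [|y s] /=; first by rewrite andbF.
by case/andP; case: (x.2); case: (y.2).
Qed.

Lemma reduce_signs_id (s : seq (nat * bool)) :
  pairwise (fun x y => x.2 || ~~ y.2) s -> reduce_signs s = s.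
Proof. by rewrite /reduce_signs => Hs; elim: (size s) => //= k ->; rewrite del_mp_id. Qed.

Lemma kashiwara_f_word_last_before_succ i u n : last_before_succ i u n ->
  kashiwara_f_word i u = Some (set_nth 0 u n i.+1).
Proof.
case=> Hn Hni Hm.
pose P k := (nth 0 u k == i) || (nth 0 u k == i.+1).
have plus_before_minus : pairwise (fun x y : nat * bool => x.2 || ~~ y.2) (signs i u).
  rewrite /signs pairwise_map.
  have : pairwise ltn [seq k <- iota 0 (size u) | P k].
    by apply: pairwise_filter; rewrite -sorted_pairwise ?iota_ltn_sorted //; exact: ltn_trans.
  apply: (sub_in_pairwise (P := fun k => (k < size u) && P k)); last first.
    by apply/allP => k; rewrite mem_filter mem_iota leq0n add0n andbC.
  move=> a b /andP [Ha Pa] /andP [Hb _] /= Hab; case: eqP => //= Hai.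
  have Ha1 : nth 0 u a = i.+1 by move: Pa; rewrite /P (introF eqP Hai) => /eqP.
  by apply/eqP => /((Hm b Hb).1); have := (Hm a Ha).2 Ha1; lia.
rewrite /kashiwara_f_word reduce_signs_id // /signs filter_map -map_comp map_id_in //.
have -> : [seq k <- [seq k <- iota 0 (size u) | P k] | (nth 0 u k == i)] =
          [seq k <- iota 0 (size u) | nth 0 u k == i].
  by rewrite -filter_predI; apply: eq_filter => k /=; rewrite /P; case: eqP.
have -> : iota 0 (size u) = iota 0 n ++ n :: iota n.+1 (size u - n.+1).
  by rewrite -{1}(subnKC Hn) -addn1 -addnA add1n !iotaD add0n addn1.
rewrite filter_cat /= Hni eqxx.
have -> : [seq k <- iota n.+1 (size u - n.+1) | nth 0 u k == i] = [::].
  rewrite (eq_in_filter (a2 := pred0)) ?filter_pred0 // => k.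
  rewrite mem_iota => /andP [Hk1 Hk2]; apply/negbTE/eqP => Hki.
  have Hk : k < size u by lia.
  by have := (Hm k Hk).1 Hki; lia.
by case: [seq k <- iota 0 n | _] => [|x s] //=; rewrite last_cat.
Qed.

Definition offset (A : array) m := (nth (0, [::]) A m).1.
Definition row (A : array) m := (nth (0, [::]) A m).2.
Definition entry (A : array) (x : nat * nat) := odflt 0 (cell_at A x.1 x.2).

Definition reading_lt (x y : nat * nat) := (x.2 < y.2) || ((x.2 == y.2) && (y.1 < x.1)).

Lemma cell_atE A m c : cell_at A m c =
  if offset A m <= c < offset A m + size (row A m)
  then Some (nth 0 (row A m) (c - offset A m)) else None.
Proof. by rewrite /cell_at /offset /row; case: nth. Qed.

Lemma mem_reading_cells A m c : ((m, c) \in reading_cells A) =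
  (m < size A) && (offset A m <= c < offset A m + size (row A m)).
Proof.
apply/flatten_mapP/andP => [[c' _ /mapP [m' Hm' [-> ->]]]|[Hm Hc]].
  move: Hm'; rewrite mem_filter mem_rev mem_iota cell_atE add0n.
  by case: ifP => // ? /and3P [].
exists c.
  rewrite mem_iota /=; apply: (@leq_trans (offset A m + size (row A m))).
    by case/andP: Hc.
  by apply/leq_foldr_maxn/mapP; exists (nth (0, [::]) A m); [exact: mem_nth|].
by apply/mapP; exists m; rewrite // mem_filter mem_rev mem_iota cell_atE Hc Hm.
Qed.

Lemma entry_offset A m j : j < size (row A m) ->
  entry A (m, offset A m + j) = nth 0 (row A m) j.
Proof. by move=> Hj; rewrite /entry cell_atE /= leq_addr ltn_add2l Hj addKn. Qed.

Lemma mem_reading_cells_offset A m j : m < size A -> j < size (row A m) ->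
  (m, offset A m + j) \in reading_cells A.
Proof. by move=> Hm Hj; rewrite mem_reading_cells Hm leq_addr ltn_add2l. Qed.

Lemma reading_cellsP A m c : (m, c) \in reading_cells A ->
  exists2 j, c = offset A m + j & j < size (row A m).
Proof.
rewrite mem_reading_cells => /and3P [_ Hoc Hc]; exists (c - offset A m).
  by rewrite subnKC.
by rewrite ltn_subLR.
Qed.

Lemma col_readingE A : col_reading A = map (entry A) (reading_cells A).
Proof.
rewrite /col_reading /reading_cells map_flatten -map_comp; congr flatten.
apply: eq_map => c /=; rewrite /col_cells -map_comp.
elim: (rev _) => //= m s IH; rewrite /entry /=.
by case E: (cell_at A m c) => [v|] /=; rewrite IH // /entry /= E.
Qed.

Lemma reading_cells_pairwise A : pairwise reading_lt (reading_cells A).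
Proof.
rewrite /reading_cells.
have : pairwise ltn (iota 0 (ncols A)).
  by rewrite -sorted_pairwise ?iota_ltn_sorted //; exact: ltn_trans.
elim: (iota 0 _) => //= c s IH /andP [Hc Hs]; rewrite pairwise_cat IH // andbT.
apply/andP; split.
  apply/allrelP => x y /mapP [m _ ->] /flatten_mapP [c' Hc' /mapP [m' _ ->]].
  by apply/orP; left; exact: (allP Hc c' Hc').
rewrite pairwise_map; apply: pairwise_filter.
have : pairwise (fun a b => b < a) (rev (iota 0 (size A))).
  have : sorted ltn (iota 0 (size A)) by exact: iota_ltn_sorted.
  by rewrite -rev_sorted sorted_pairwise // => a b d /= H1 H2; exact: ltn_trans H2 H1.
by apply: sub_pairwise => a b /= H; rewrite /reading_lt /= eqxx H orbT.
Qed.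

Lemma uniq_reading_cells A : uniq (reading_cells A).
Proof.
by apply: pairwise_uniq (reading_cells_pairwise A) => x; rewrite /reading_lt !ltnn andbF.
Qed.

Lemma index_reading_lt A x y : x \in reading_cells A -> y \in reading_cells A ->
  reading_lt x y -> index x (reading_cells A) < index y (reading_cells A).
Proof.
move=> Hx Hy Hxy; case: ltngtP => // H.
  move/(pairwiseP (0, 0)): (reading_cells_pairwise A) => /(_ _ _ _ _ H).
  rewrite !nth_index // !inE !index_mem => /(_ Hy Hx).
  by move: Hxy; rewrite /reading_lt; lia.
have Exy : x = y := index_inj (0, 0) Hx Hy H.
by move: Hxy; rewrite Exy /reading_lt !ltnn andbF.
Qed.

Lemma subseq_reading_entries A x y : x \in reading_cells A -> y \in reading_cells A ->
  reading_lt x y -> subseq [:: entry A x; entry A y] (col_reading A).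
Proof.
move=> Hx Hy Hxy.
have Hidx := index_reading_lt Hx Hy Hxy.
have := @subseq_nth2 (col_reading A) (index x (reading_cells A)) (index y (reading_cells A)).
rewrite col_readingE size_map index_mem Hy Hidx !(nth_map (0, 0)) ?index_mem //.
by rewrite !nth_index //; apply.
Qed.

Notation "T `[ m , j ]" := (nth 0 (nth [::] T m) j) (at level 2, format "T `[ m ,  j ]").

Lemma row_lt_size (T : seq (seq nat)) m j : j < size (nth [::] T m) -> m < size T.
Proof. by move=> Hj; rewrite ltnNge; apply: contraTN Hj => /(nth_default [::]) ->. Qed.

Definition set_entry (T : seq (seq nat)) m j v :=
  set_nth [::] T m (set_nth 0 (nth [::] T m) j v).

Lemma set_entryE T m j v m' j' :
  (set_entry T m j v)`[m', j'] = if (m' == m) && (j' == j) then v else T`[m', j'].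
Proof. by rewrite !nth_set_nth /=; case: eqP => [->|] //=; rewrite nth_set_nth. Qed.

Lemma shape_set_entry T m j v : j < size (nth [::] T m) ->
  shape (set_entry T m j v) = shape T.
Proof.
move=> Hj; have Hm := row_lt_size Hj.
apply: (@eq_from_nth _ 0) => [|m']; rewrite !size_map size_set_nth; first lia.
move=> Hm'; rewrite !nth_shape nth_set_nth /=; case: eqP => [->|//].
by rewrite size_set_nth; lia.
Qed.

Lemma eq_tableau T1 T2 : shape T1 = shape T2 ->
  (forall m j, j < size (nth [::] T1 m) -> T1`[m, j] = T2`[m, j]) -> T1 = T2.
Proof.
move=> Hsh Hent; apply: (@eq_from_nth _ [::]) => [|m Hm].
  by rewrite -(size_map size T1) -(size_map size T2); congr size.
have Hsz : size (nth [::] T1 m) = size (nth [::] T2 m) by rewrite -!nth_shape Hsh.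
by apply: (@eq_from_nth _ 0) => // j Hj; apply: Hent.
Qed.

Lemma size_refill A w : size (refill A w) = size A.
Proof. by rewrite size_map size_zip size_iota minnn. Qed.

Lemma nth_refill A w m : m < size A ->
  nth [::] (map snd (refill A w)) m =
  [seq nth 0 w (index (m, c) (reading_cells A)) | c <- iota (offset A m) (size (row A m))].
Proof.
move=> Hm; rewrite (nth_map (0, [::])) ?size_refill // /refill.
have Hz : m < size (zip (iota 0 (size A)) A) by rewrite size_zip size_iota minnn.
rewrite (nth_map (0, (0, [::]))) //.
by rewrite (@nth_zip _ _ 0 (0, [::]) (iota 0 (size A)) A) ?size_iota //= nth_iota.
Qed.

Lemma shape_refill A w : shape (map snd (refill A w)) = shape (map snd A).
Proof.
apply: (@eq_from_nth _ 0) => [|m]; rewrite !size_map size_zip size_iota minnn // => Hm.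
by rewrite !nth_shape nth_refill // size_map size_iota (nth_map (0, [::])).
Qed.

Lemma nth_col_reading A x : x \in reading_cells A ->
  nth 0 (col_reading A) (index x (reading_cells A)) = entry A x.
Proof. by move=> Hx; rewrite col_readingE (nth_map (0, 0)) ?index_mem // nth_index. Qed.

Lemma refill_set_nth A y v : y \in reading_cells A ->
  map snd (refill A (set_nth 0 (col_reading A) (index y (reading_cells A)) v)) =
  set_entry (map snd A) y.1 (y.2 - offset A y.1) v.
Proof.
case: y => a c Hy; have := Hy; rewrite mem_reading_cells /= => /andP [Ha Hc].
have Hrow m : m < size A -> nth [::] (map snd A) m = row A m.
  by move=> Hm; rewrite (nth_map (0, [::])).
apply: eq_tableau => [|m j]; first by rewrite shape_set_entry ?shape_refill ?Hrow //; lia.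
move=> Hj; have Hm : m < size A.
  by rewrite ltnNge; apply: contraTN Hj => Hm; rewrite nth_default // size_map size_refill.
rewrite nth_refill // size_map size_iota in Hj.
have Hz := mem_reading_cells_offset Hm Hj.
rewrite nth_refill // (nth_map 0) ?size_iota // nth_iota // nth_set_nth /= set_entryE Hrow //.
have -> : (index (m, offset A m + j) (reading_cells A) == index (a, c) (reading_cells A)) =
          (m == a) && (j == c - offset A a).
  apply/eqP/andP => [/(index_inj (0, 0) Hz Hy) [-> <-]|[/eqP -> /eqP ->]].
    by rewrite addKn.
  by rewrite subnKC //; case/andP: Hc.
by case: ifP => // _; rewrite nth_col_reading // entry_offset.
Qed.

Lemma col_reading_last_before_succ A i y :
  y \in reading_cells A -> entry A y = i ->
  (forall z, z \in reading_cells A -> entry A z = i -> z = y \/ z.2 < y.2) ->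
  (forall z, z \in reading_cells A -> entry A z = i.+1 -> y.2 < z.2) ->
  last_before_succ i (col_reading A) (index y (reading_cells A)).
Proof.
move=> Hy Hyi Hi Hi1; split; first by rewrite col_readingE size_map index_mem.
  by rewrite nth_col_reading.
move=> m; rewrite col_readingE size_map => Hm.
set z := nth (0, 0) (reading_cells A) m.
have Hz : z \in reading_cells A by exact: mem_nth.
have Em : index z (reading_cells A) = m by rewrite index_uniq ?uniq_reading_cells.
rewrite (nth_map (0, 0)) // -/z; split => Hzi.
  case: (Hi z Hz Hzi) => [Ezy|Hlt]; first by rewrite -Em Ezy.
  by rewrite -Em ltnW // index_reading_lt // /reading_lt Hlt.
by rewrite -Em index_reading_lt // /reading_lt Hi1.
Qed.

Section XiShape.
Variable S : seq nat.

Definition rows_reaching j := [seq m <- iota 0 (size S) | j < nth 0 S m].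
Definition col_size j := size (rows_reaching j).
Definition shape_width := foldr maxn 0 S.
Definition xi_height := foldr maxn 0 [seq col_size j | j <- iota 0 shape_width].
Definition xi_row_size k := count (fun j => k < col_size j) (iota 0 shape_width).
(* the row of the source tableau whose entry in column [j] lands in row [k] of [xi] *)
Definition xi_source j k := nth 0 (rows_reaching j) k.

Lemma mem_rows_reaching j m : (m \in rows_reaching j) = (m < size S) && (j < nth 0 S m).
Proof. by rewrite mem_filter mem_iota leq0n add0n andbC. Qed.

Lemma sorted_rows_reaching j : sorted ltn (rows_reaching j).
Proof. apply: sorted_filter; [exact: ltn_trans | exact: iota_ltn_sorted]. Qed.

Lemma col_size_antitone j j' : j <= j' -> col_size j' <= col_size j.
Proof.
by move=> Hjj'; rewrite /col_size !size_filter; apply: sub_count => m /=; apply: leq_ltn_trans.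
Qed.

Lemma lt_xi_row_size j k : (j < xi_row_size k) = (k < col_size j) && (j < shape_width).
Proof.
by apply: lt_count_iota => j1 j2 /col_size_antitone Hc /leq_trans; apply.
Qed.

Lemma filter_col_size k :
  [seq j <- iota 0 shape_width | k < col_size j] = iota 0 (xi_row_size k).
Proof.
apply: (irr_sorted_eq ltn_trans ltnn); last 1 first.
- by move=> j; rewrite mem_filter !mem_iota /= lt_xi_row_size.
- by apply: sorted_filter; [exact: ltn_trans | exact: iota_ltn_sorted].
- exact: iota_ltn_sorted.
Qed.

Lemma lt_shape_width m j : j < nth 0 S m -> j < shape_width.
Proof.
case: (ltnP m (size S)) => Hm; last by rewrite nth_default.
by move=> Hj; apply: leq_trans Hj (leq_foldr_maxn _); rewrite mem_nth.
Qed.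

Lemma col_size_of_row_size j k : j < xi_row_size k -> k < col_size j.
Proof. by rewrite lt_xi_row_size => /andP []. Qed.

Lemma lt_xi_height j k : k < col_size j -> j < shape_width -> k < xi_height.
Proof.
move=> Hk Hj; apply: leq_trans Hk (leq_foldr_maxn _).
by apply: map_f; rewrite mem_iota.
Qed.

Lemma xi_row_size_gt0 k : k < xi_height -> 0 < xi_row_size k.
Proof.
move=> /foldr_maxn_gt [_ /mapP [j Hj ->] Hk]; rewrite mem_iota in Hj.
by apply: leq_ltn_trans (leq0n j) _; rewrite lt_xi_row_size Hk.
Qed.

Lemma xi_row_size_succ k : xi_row_size k.+1 <= xi_row_size k.
Proof. by apply: sub_count => j /= /ltnW. Qed.

Lemma xi_sourceP j k : k < col_size j ->
  (xi_source j k < size S) && (j < nth 0 S (xi_source j k)).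
Proof. by move=> Hk; rewrite -mem_rows_reaching mem_nth. Qed.

Lemma index_rows_reaching a p : p < nth 0 S a -> index a (rows_reaching p) < col_size p.
Proof.
move=> Hp; rewrite index_mem mem_rows_reaching Hp andbT.
by apply: contraTT Hp; rewrite -leqNgt => /(nth_default 0) ->.
Qed.

Lemma xi_source_index a p : p < nth 0 S a -> xi_source p (index a (rows_reaching p)) = a.
Proof. by move=> Hp; rewrite /xi_source nth_index // -index_mem index_rows_reaching. Qed.

Lemma lt_xi_row_size_index a p : p < nth 0 S a -> p < xi_row_size (index a (rows_reaching p)).
Proof. by move=> Hp; rewrite lt_xi_row_size index_rows_reaching // (lt_shape_width Hp). Qed.

Lemma index_xi_source j k : k < col_size j -> index (xi_source j k) (rows_reaching j) = k.
Proof.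
move=> Hk; apply: index_uniq => //.
exact: sorted_uniq ltn_trans ltnn _ (sorted_rows_reaching j).
Qed.

Lemma xi_source_lt j k1 k2 : k1 < k2 -> k2 < col_size j -> xi_source j k1 < xi_source j k2.
Proof.
move=> Hk12 Hk2; apply: (sorted_ltn_nth ltn_trans 0 (sorted_rows_reaching j)) => //.
by rewrite inE (ltn_trans Hk12).
Qed.

Lemma xi_source_succ j k : k < col_size j.+1 -> xi_source j k <= xi_source j.+1 k.
Proof.
have E : rows_reaching j.+1 = [seq m <- rows_reaching j | j.+1 < nth 0 S m].
  by rewrite -filter_predI; apply: eq_filter => m /=; case: ltnP => //= /ltnW ->.
move=> Hk; rewrite /xi_source E; apply: nth_filter_ge; first exact: sorted_rows_reaching.
by rewrite -E.
Qed.

End XiShape.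

Lemma xiE Q : xi Q =
  [seq [seq Q`[xi_source (shape Q) j k, j] | j <- iota 0 (xi_row_size (shape Q) k)]
  | k <- iota 0 (xi_height (shape Q))].
Proof.
have colsE : xi_cols Q = [seq [seq Q`[m, j] | m <- rows_reaching (shape Q) j]
                         | j <- iota 0 (shape_width (shape Q))].
  rewrite /xi_cols /shape_width; apply: eq_map => j; rewrite /rows_reaching size_map.
  rewrite -{1}(mkseq_nth [::] Q) /mkseq filter_map -map_comp.
  by congr map; apply: eq_filter => m /=; rewrite nth_shape.
rewrite /xi colsE -map_comp.
have -> : [seq size (map (fun m => Q`[m, j]) (rows_reaching (shape Q) j))
          | j <- iota 0 (shape_width (shape Q))] =
          [seq col_size (shape Q) j | j <- iota 0 (shape_width (shape Q))].
  by apply: eq_map => j; rewrite /= size_map.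
apply: eq_map => k; rewrite filter_map -map_comp -filter_col_size.
rewrite (eq_filter (a2 := fun j => k < col_size (shape Q) j)) => [|j]; last first.
  by rewrite /= size_map.
by apply/eq_in_map => j; rewrite mem_filter /= => /andP [Hk _]; rewrite (nth_map 0).
Qed.

Lemma size_xi Q : size (xi Q) = xi_height (shape Q).
Proof. by rewrite xiE size_map size_iota. Qed.

Lemma size_nth_xi Q k : size (nth [::] (xi Q) k) = xi_row_size (shape Q) k.
Proof.
rewrite xiE; case: (ltnP k (xi_height (shape Q))) => Hk.
  by rewrite (nth_map 0) ?size_iota // size_map size_iota nth_iota.
rewrite nth_default ?size_map ?size_iota //; apply/esym/eqP; rewrite eqn0Ngt.
apply: contraTN Hk; rewrite lt_xi_row_size -ltnNge => /andP [H1 H2].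
exact: lt_xi_height H1 H2.
Qed.

Lemma shape_xi Q :
  shape (xi Q) = [seq xi_row_size (shape Q) k | k <- iota 0 (xi_height (shape Q))].
Proof.
have Hsz : size (shape (xi Q)) = xi_height (shape Q) by rewrite /shape size_map size_xi.
apply: (@eq_from_nth _ 0) => [|k]; rewrite Hsz ?size_map ?size_iota // => Hk.
by rewrite nth_shape size_nth_xi (nth_map 0) ?size_iota // nth_iota.
Qed.

Lemma nth_xi Q k j : j < xi_row_size (shape Q) k ->
  (xi Q)`[k, j] = Q`[xi_source (shape Q) j k, j].
Proof.
move=> Hj; have := Hj; rewrite lt_xi_row_size => /andP [Hk Hw].
have Hh := lt_xi_height Hk Hw.
by rewrite xiE (nth_map 0) ?size_iota // nth_iota // (nth_map 0) ?size_iota // nth_iota.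
Qed.

Lemma size_xi_source (Q : seq (seq nat)) j k : k < col_size (shape Q) j ->
  j < size (nth [::] Q (xi_source (shape Q) j k)).
Proof. by move/xi_sourceP => /andP [_]; rewrite nth_shape. Qed.

Lemma xi_set_entry Q a p v : p < size (nth [::] Q a) ->
  xi (set_entry Q a p v) = set_entry (xi Q) (index a (rows_reaching (shape Q) p)) p v.
Proof.
move=> Hp; set S := shape Q; set k0 := index a (rows_reaching S p).
have HpS : p < nth 0 S a by rewrite nth_shape.
have HS : shape (set_entry Q a p v) = S by exact: shape_set_entry.
apply: eq_tableau => [|k j].
  by rewrite shape_set_entry ?shape_xi ?HS // size_nth_xi lt_xi_row_size_index.
rewrite size_nth_xi HS => Hj.
rewrite nth_xi ?HS // set_entryE set_entryE nth_xi //; congr (if _ then _ else _).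
case: (eqVneq j p) => [Ejp|]; last by rewrite !andbF.
have Hk : k < col_size S p by move: Hj; rewrite Ejp lt_xi_row_size => /andP [].
rewrite Ejp !andbT /k0; apply/eqP/eqP => [<-|->]; first by rewrite index_xi_source.
exact: xi_source_index.
Qed.

Lemma size_qr_offsets o Q : size (qr_offsets o Q) = size Q.
Proof. by elim: Q o => //= r Q IH o; rewrite IH. Qed.

Lemma qr_offsets_succ o Q m : m.+1 < size Q ->
  nth 0 (qr_offsets o Q) m.+1 = nth 0 (qr_offsets o Q) m + size (nth [::] Q m) - 1.
Proof. by elim: Q o m => // r Q IH o [|m] /= Hm; [case: Q Hm {IH} | exact: IH]. Qed.

Lemma size_qr_array Q : size (qr_array Q) = size Q.
Proof. by rewrite size_zip size_qr_offsets minnn. Qed.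

Lemma offset_qr_array Q m : offset (qr_array Q) m = nth 0 (qr_offsets 0 Q) m.
Proof. by rewrite /offset nth_zip ?size_qr_offsets. Qed.

Lemma row_qr_array Q m : row (qr_array Q) m = nth [::] Q m.
Proof. by rewrite /row nth_zip ?size_qr_offsets. Qed.

Lemma qr_array_rows Q : map snd (qr_array Q) = Q.
Proof. by apply: unzip2_zip; rewrite size_qr_offsets. Qed.

Lemma size_young_array T : size (young_array T) = size T.
Proof. exact: size_map. Qed.

Lemma nth_young_array T k : nth (0, [::]) (young_array T) k = (0, nth [::] T k).
Proof.
case: (ltnP k (size T)) => Hk; first by rewrite (nth_map [::]).
by rewrite !nth_default ?size_map.
Qed.

Lemma offset_young_array T k : offset (young_array T) k = 0.
Proof. by rewrite /offset nth_young_array. Qed.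

Lemma row_young_array T k : row (young_array T) k = nth [::] T k.
Proof. by rewrite /row nth_young_array. Qed.

Lemma young_array_rows T : map snd (young_array T) = T.
Proof. by rewrite -map_comp map_id. Qed.

Lemma mem_reading_cells_young T k j :
  ((k, j) \in reading_cells (young_array T)) = (j < size (nth [::] T k)).
Proof.
rewrite mem_reading_cells size_young_array offset_young_array row_young_array add0n /=.
by case: ltnP => // Hk; rewrite nth_default.
Qed.

Lemma entry_young_array T k j : entry (young_array T) (k, j) = T`[k, j].
Proof.
rewrite /entry cell_atE offset_young_array row_young_array add0n subn0 /=.
by case: ltnP => // Hj; rewrite nth_default.
Qed.

Lemma last_occurrence (r : seq nat) i : i \in r ->
  exists2 p, (p < size r) && (nth 0 r p == i) & forall j, p < j < size r -> nth 0 r j != i.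
Proof.
move=> Hi; have exP : exists j, (j < size r) && (nth 0 r j == i).
  by exists (index i r); rewrite index_mem Hi nth_index ?eqxx.
have ubP j : (j < size r) && (nth 0 r j == i) -> j <= size r by case/andP => /ltnW.
have [p Hp Hmax] := ex_maxnP exP ubP.
exists p => // j /andP [Hpj Hj]; apply/negP => Hji.
by have := Hmax j; rewrite Hj Hji => /(_ isT); rewrite leqNgt Hpj.
Qed.

Lemma exists_last_letter Q i : i \in col_reading (qr_array Q) ->
  exists a p, [/\ p < size (nth [::] Q a), Q`[a, p] = i
              & forall j, p < j < size (nth [::] Q a) -> Q`[a, j] != i].
Proof.
rewrite col_readingE => /mapP [[a c] /reading_cellsP [j -> Hj] ->].
have Hin : entry (qr_array Q) (a, offset (qr_array Q) a + j) \in nth [::] Q a.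
  by rewrite entry_offset // -row_qr_array mem_nth.
by have [p /andP [Hp /eqP Hpi] Hlast] := last_occurrence Hin; exists a, p.
Qed.

Section QuasiRibbon.
Variable Q : seq (seq nat).
Hypothesis HQ : is_qrt Q.

Lemma qrt_row m : m < size Q ->
  [/\ 0 < size (nth [::] Q m), sorted leq (nth [::] Q m)
    & all (fun x => 0 < x) (nth [::] Q m)].
Proof.
case/andP: HQ => /allP H _ Hm; have := H _ (mem_nth [::] Hm).
by case/andP => /andP [Hne ->] ->; rewrite lt0n size_eq0.
Qed.

Lemma size_qrt_row m : m < size Q -> 0 < size (nth [::] Q m).
Proof. by case/qrt_row. Qed.

Lemma qrt_entry_gt0 m j : j < size (nth [::] Q m) -> 0 < Q`[m, j].
Proof.
move=> Hj; have Hm := row_lt_size Hj.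
by have [_ _ /allP] := qrt_row Hm; apply; rewrite mem_nth.
Qed.

Lemma qrt_entry_le m j1 j2 : j1 <= j2 -> j2 < size (nth [::] Q m) -> Q`[m, j1] <= Q`[m, j2].
Proof.
move=> H12 Hj2; have Hm := row_lt_size Hj2.
have [_ Hs _] := qrt_row Hm.
by apply: (sorted_leq_nth leq_trans leqnn 0 Hs); rewrite // inE (leq_ltn_trans H12).
Qed.

Lemma qrt_last_lt_head m : m.+1 < size Q -> last 0 (nth [::] Q m) < head 0 (nth [::] Q m.+1).
Proof. by case/andP: HQ => _ /(sortedP [::]); apply. Qed.

Lemma qrt_entry_lt m1 m2 j1 j2 : m1 < m2 ->
  j1 < size (nth [::] Q m1) -> j2 < size (nth [::] Q m2) -> Q`[m1, j1] < Q`[m2, j2].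
Proof.
move=> + Hj1; elim: m2 j2 => // m2 IH j2; rewrite ltnS => H12 Hj2.
have Hm2 := row_lt_size Hj2.
have Hlast : Q`[m1, j1] <= last 0 (nth [::] Q m2).
  have Hs := size_qrt_row (ltnW Hm2); rewrite -nth_last.
  move: H12; rewrite leq_eqVlt => /orP [/eqP <-|H12]; first by apply: qrt_entry_le; lia.
  by apply: ltnW; apply: IH; rewrite // prednK.
apply: leq_ltn_trans Hlast (leq_trans (qrt_last_lt_head Hm2) _).
by rewrite -nth0; apply: qrt_entry_le.
Qed.

Lemma xi_young : is_young (xi Q).
Proof.
set S := shape Q.
have src_cell := @size_xi_source Q; have col_of_row := @col_size_of_row_size S.
apply/andP; split.
  apply/allP => r /(nthP [::]) [k Hk <-]; rewrite size_xi in Hk.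
  rewrite -size_eq0 size_nth_xi -lt0n xi_row_size_gt0 //=.
  apply/andP; split.
    apply/(sortedP 0) => j; rewrite size_nth_xi => Hj.
    rewrite !nth_xi ?(ltnW Hj) //; have Hk1 := col_of_row _ _ Hj.
    have Hk0 : k < col_size S j := leq_trans Hk1 (col_size_antitone S (leqnSn j)).
    have := xi_source_succ Hk1; rewrite leq_eqVlt => /orP [/eqP E|Hlt].
      by rewrite -E; apply: qrt_entry_le (leqnSn j) _; rewrite E; exact: src_cell.
    by apply/ltnW/qrt_entry_lt => //; exact: src_cell.
  apply/allP => x /(nthP 0) [j Hj <-]; rewrite size_nth_xi in Hj.
  by rewrite nth_xi //; apply/qrt_entry_gt0/src_cell/col_of_row.
apply/(sortedP [::]) => k; rewrite size_xi => Hk.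
rewrite !size_nth_xi xi_row_size_succ /=.
apply/allP => j; rewrite mem_iota add0n => /= Hj; have Hkc := col_of_row _ _ Hj.
rewrite !nth_xi //; last exact: leq_trans Hj (xi_row_size_succ S k).
apply: qrt_entry_lt; [exact: xi_source_lt | exact: src_cell (ltnW Hkc) | exact: src_cell].
Qed.

(* The first cell of row [b.+1] lies directly below the last cell of row [b]. *)
Lemma qr_reading_head_last b : b.+1 < size Q ->
  subseq [:: head 0 (nth [::] Q b.+1); last 0 (nth [::] Q b)] (col_reading (qr_array Q)).
Proof.
move=> Hb1; have Hb := ltnW Hb1.
have Hs := size_qrt_row Hb; have Hs1 := size_qrt_row Hb1.
have Hx : (b.+1, offset (qr_array Q) b.+1 + 0) \in reading_cells (qr_array Q).
  by rewrite mem_reading_cells_offset ?size_qr_array ?row_qr_array.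
have Hy : (b, offset (qr_array Q) b + (size (nth [::] Q b)).-1) \in reading_cells (qr_array Q).
  by rewrite mem_reading_cells_offset ?size_qr_array ?row_qr_array ?prednK.
have Hxy : reading_lt (b.+1, offset (qr_array Q) b.+1 + 0)
                      (b, offset (qr_array Q) b + (size (nth [::] Q b)).-1).
  rewrite /reading_lt /= !offset_qr_array qr_offsets_succ // addn0 -subn1 addnBA //.
  by rewrite eqxx ltnSn orbT.
have := subseq_reading_entries Hx Hy Hxy.
by rewrite !entry_offset ?row_qr_array ?prednK // nth0 nth_last.
Qed.

Section LastLetter.
Variables (i a p : nat).
Hypothesis Hp : p < size (nth [::] Q a).
Hypothesis Hap : Q`[a, p] = i.
Hypothesis Hlast : forall j, p < j < size (nth [::] Q a) -> Q`[a, j] != i.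

Lemma letter_cell m j : j < size (nth [::] Q m) -> Q`[m, j] = i -> m = a /\ j <= p.
Proof.
move=> Hj Hmj; case: (ltngtP m a) => [Hma|Ham|Ema].
- by have := qrt_entry_lt Hma Hj Hp; rewrite Hmj Hap ltnn.
- by have := qrt_entry_lt Ham Hp Hj; rewrite Hmj Hap ltnn.
- split=> //; rewrite leqNgt; apply/negP => Hpj.
  by have := @Hlast j; rewrite Hpj -Ema Hj Hmj eqxx => /(_ isT).
Qed.

Hypothesis Hns : ~~ subseq [:: i.+1; i] (col_reading (qr_array Q)).

Lemma succ_cell m j : j < size (nth [::] Q m) -> Q`[m, j] = i.+1 -> m = a /\ p < j.
Proof.
move=> Hj Hmj; case: (ltngtP m a) => [Hma|Ham|Ema]; last first.
- subst m; split=> //; rewrite ltnNge; apply/negP => Hjp.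
  by have := qrt_entry_le Hjp Hp; rewrite Hmj Hap ltnn.
- (* then row [a.+1] starts with [i.+1] right under a last entry [i] of row [a] *)
  exfalso; have Hm := row_lt_size Hj.
  have Ha1 : a.+1 < size Q := leq_ltn_trans Ham Hm.
  have H0 := size_qrt_row Ha1.
  have Hhead_gt : i < head 0 (nth [::] Q a.+1) by rewrite -nth0 -Hap qrt_entry_lt.
  have Hhead_le : head 0 (nth [::] Q a.+1) <= i.+1.
    rewrite -nth0 -Hmj; move: Ham; rewrite leq_eqVlt => /orP [/eqP ->|Ham].
      exact: qrt_entry_le.
    exact/ltnW/qrt_entry_lt.
  have Hlast_ge : i <= last 0 (nth [::] Q a).
    by rewrite -nth_last -Hap qrt_entry_le // ?prednK ?ltn_predRL //; lia.
  have Hlast_lt := qrt_last_lt_head Ha1.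
  have Hhead : head 0 (nth [::] Q a.+1) = i.+1 by lia.
  have Hlast_a : last 0 (nth [::] Q a) = i by lia.
  by have := qr_reading_head_last Ha1; rewrite Hhead Hlast_a (negbTE Hns).
- by have := qrt_entry_lt Hma Hj Hp; rewrite Hmj Hap ltnNge leqnSn.
Qed.

Lemma qr_f_last_letter : qr_f i Q = Some (set_entry Q a p i.+1).
Proof.
have Ha := row_lt_size Hp.
set y := (a, offset (qr_array Q) a + p).
have Hy : y \in reading_cells (qr_array Q).
  by rewrite mem_reading_cells_offset ?size_qr_array ?row_qr_array.
have cellE m c : (m, c) \in reading_cells (qr_array Q) -> exists2 j,
    (m, c) = (m, offset (qr_array Q) m + j) & j < size (nth [::] Q m) /\
    entry (qr_array Q) (m, c) = Q`[m, j].
  by case/reading_cellsP => j -> Hj; exists j; rewrite ?entry_offset -?row_qr_array.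
have Hsplit : last_before_succ i (col_reading (qr_array Q))
                (index y (reading_cells (qr_array Q))).
  apply: col_reading_last_before_succ => //.
  - by rewrite entry_offset row_qr_array.
  - move=> [m c] /cellE [j -> [Hj ->]] /(letter_cell Hj) [-> Hjp].
    move: Hjp; rewrite leq_eqVlt => /orP [/eqP ->|Hjp]; first by left.
    by right; rewrite /= ltn_add2l.
  - by move=> [m c] /cellE [j -> [Hj ->]] /(succ_cell Hj) [-> Hpj]; rewrite /= ltn_add2l.
rewrite /qr_f (quasi_f_word_last_before_succ Hsplit) /=.
by rewrite refill_set_nth // qr_array_rows addKn.
Qed.

Lemma young_f_xi_last_letter :
  young_f i (xi Q) = Some (set_entry (xi Q) (index a (rows_reaching (shape Q) p)) p i.+1).
Proof.
set S := shape Q; set k0 := index a (rows_reaching S p).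
have HpS : p < nth 0 S a by rewrite nth_shape.
have Hsrc := xi_source_index HpS; have Hp0 := lt_xi_row_size_index HpS.
have cellE k j : (k, j) \in reading_cells (young_array (xi Q)) ->
    j < xi_row_size S k /\ entry (young_array (xi Q)) (k, j) = Q`[xi_source S j k, j].
  by rewrite mem_reading_cells_young size_nth_xi entry_young_array => Hj; rewrite nth_xi.
have Hsplit : last_before_succ i (col_reading (young_array (xi Q)))
                (index (k0, p) (reading_cells (young_array (xi Q)))).
  apply: col_reading_last_before_succ.
  - by rewrite mem_reading_cells_young size_nth_xi.
  - by rewrite entry_young_array nth_xi // Hsrc.
  - move=> [k j] /cellE [Hj ->] /(letter_cell (size_xi_source (col_size_of_row_size Hj))).
    move=> [Ea]; rewrite leq_eqVlt => /orP [/eqP Ejp|]; [left | by right].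
    by rewrite Ejp /k0 -Ea Ejp index_xi_source // -Ejp col_size_of_row_size.
  - move=> [k j] /cellE [Hj ->].
    by move=> /(succ_cell (size_xi_source (col_size_of_row_size Hj))) [].
rewrite /young_f (kashiwara_f_word_last_before_succ Hsplit) /=.
rewrite refill_set_nth ?young_array_rows ?offset_young_array ?subn0 //.
by rewrite mem_reading_cells_young size_nth_xi.
Qed.

End LastLetter.
End QuasiRibbon.

Theorem corollary6p3 (Q : seq (seq nat)) :
  is_qrt Q ->
  is_young (xi Q) /\
  (forall i : nat, 0 < i -> qr_f i Q != None ->
     omap xi (qr_f i Q) = young_f i (xi Q)).
Proof.
move=> HQ; split=> [|i _ Hdef]; first exact: xi_young.
have [Hns Hi] : ~~ subseq [:: i.+1; i] (col_reading (qr_array Q)) /\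
                i \in col_reading (qr_array Q).
  by move: Hdef; rewrite /qr_f /quasi_f_word; case: ifP => // /norP [-> /negPn].
have [a [p [Hp Hap Hlast]]] := exists_last_letter Hi.
rewrite (qr_f_last_letter HQ Hp Hap Hlast Hns) (young_f_xi_last_letter HQ Hp Hap Hlast Hns).
by rewrite /= xi_set_entry.
Qed.
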